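(* Let $U,V\subseteq\mathbb{R}^n$ be bounded sets, each spanning $\mathbb{R}^n$, and let $\Delta=\sup_{u\in U,v\in V}|\langle u,v\rangle|$. Then there exists an invertible linear operator $L:\mathbb{R}^n\to\mathbb{R}^n$ such that $\|Lu\|_2\le n^{1/4}\sqrt{\Delta}$ for all $u\in U$ and $\|(L^{-1})^Tv\|_2\le n^{1/4}\sqrt{\Delta}$ for all $v\in V$. *)

(* Real numbers: a real closed field that is Dedekind complete
   (i.e. R is (isomorphic to) the reals). *)
From HB Require Import structures.
From mathcomp Require Import all_boot all_order all_algebra.
Set Implicit Arguments. Unset Strict Implicit. Unset Printing Implicit Defensive.
Import Order.TTheory GRing.Theory Num.Theory.
Local Open Scope ring_scope.

Definition dedekind_complete (R : realFieldType) : Prop :=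
  forall E : R -> Prop, (exists x, E x) -> (exists b, forall x, E x -> x <= b) ->
  exists s, (forall x, E x -> x <= s) /\ (forall b, (forall x, E x -> x <= b) -> s <= b).

Definition dotv (R : realFieldType) (n : nat) (u v : 'cV[R]_n) : R :=
  \sum_(i < n) u i 0 * v i 0.

Definition norm2 (R : rcfType) (n : nat) (x : 'cV[R]_n) : R :=
  Num.sqrt (dotv x x).

Definition boundedv (R : rcfType) (n : nat) (U : 'cV[R]_n -> Prop) : Prop :=
  exists M : R, forall u, U u -> norm2 u <= M.

Definition spansv (R : realFieldType) (n : nat) (U : 'cV[R]_n -> Prop) : Prop :=
  forall x : 'cV[R]_n, exists (k : nat) (us : 'I_k -> 'cV[R]_n) (c : 'I_k -> R),
    (forall i, U (us i)) /\ x = \sum_(i < k) c i *: us i.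

From HB Require Import structures.
From mathcomp Require Import all_boot all_order all_algebra perm.
From mathcomp Require Import boolp classical_sets reals topology normedtype derive.
From mathcomp Require Import ring lra.

(* Among the matrices A with |A^T v| <= 1 for all v in V, a compact set because V
   spans, pick one of maximal determinant.  If |A^-1 u|^2 > n Delta^2 for some u in
   U, then with y := A^-1 u the matrix B := b I + c y y^T, which shrinks by b < 1
   orthogonally to y and stretches by t = b + c |y|^2 along y, keeps A B in that set
   because |<y, A^T v>| = |<u, v>| <= Delta, while det B = t b^(n-1) > 1.  So
   |A^-1 u| <= sqrt n Delta on U and |A^T v| <= 1 on V, and rescaling A^-1 by
   (sqrt n Delta)^(-1/2) balances both bounds at n^(1/4) sqrt Delta. *)

Set Implicit Arguments.
Unset Strict Implicit.
Unset Printing Implicit Defensive.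
Import Order.TTheory GRing.Theory Num.Theory.
Import numFieldNormedType.Exports.
Local Open Scope ring_scope.

Section MatrixDeterminantLemma.
Variable R : comNzRingType.

Lemma det_1D_rank1 n (x : 'cV[R]_n) (z : 'rV[R]_n) :
  \det (1%:M + x *m z) = 1 + (z *m x) 0 0.
Proof.
pose M := block_mx (1%:M : 'M[R]_n) (- x) z (1%:M : 'M[R]_1).
have M_lower : M = block_mx 1%:M 0 z 1%:M *m block_mx 1%:M (- x) 0 (1%:M + z *m x).
  by rewrite mulmx_block !mul1mx !mulmx0 !mul0mx ?addr0 ?add0r mulmx1 mulmxN addrC addrK.
have M_upper : M = block_mx (1%:M + x *m z) (- x) 0 1%:M *m block_mx 1%:M 0 z 1%:M.
  by rewrite mulmx_block !mul1mx !mulmx0 !mul0mx ?addr0 ?add0r mulmx1 mulNmx addrK ?mulmx1.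
have := congr1 determinant M_lower.
rewrite {1}M_upper !det_mulmx !det_lblock !det_ublock !det1 !mul1r ?mulr1 => ->.
by rewrite det_mx11 !mxE.
Qed.

End MatrixDeterminantLemma.

Lemma det_scalarD_rank1 (F : fieldType) n (b : F) (x : 'cV[F]_n) (z : 'rV[F]_n) :
  (0 < n)%N -> b != 0 -> \det (b%:M + x *m z) = b ^+ n.-1 * (b + (z *m x) 0 0).
Proof.
move=> n_gt0 b_neq0.
have -> : b%:M + x *m z = b *: (1%:M + (b^-1 *: x) *m z).
  by rewrite scalerDr scalemx1 -scalemxAl scalerA divff // scale1r.
rewrite detZ det_1D_rank1 -scalemxAr mxE.
have -> : b ^+ n = b * b ^+ n.-1 by rewrite -exprS prednK.
by field.
Qed.

Section InnerProduct.
Variables (R : realFieldType) (n : nat).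
Implicit Types (x y : 'cV[R]_n) (A : 'M[R]_n).

Lemma dotvE x y : dotv x y = (x^T *m y) 0 0.
Proof. by rewrite /dotv mxE; apply: eq_bigr => i _; rewrite mxE. Qed.

Lemma dotvC x y : dotv x y = dotv y x.
Proof. by apply: eq_bigr => i _; rewrite mulrC. Qed.

Lemma dotv_mulmx_tr A x y : dotv x (A^T *m y) = dotv (A *m x) y.
Proof. by rewrite !dotvE trmx_mul mulmxA. Qed.

Lemma dotv_suml k (c : 'I_k -> R) (xs : 'I_k -> 'cV[R]_n) y :
  dotv (\sum_(l < k) c l *: xs l) y = \sum_(l < k) c l * dotv (xs l) y.
Proof.
rewrite dotvE linear_sum mulmx_suml summxE.
by apply: eq_bigr => l _; rewrite linearZ -scalemxAl mxE dotvE.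
Qed.

Lemma dotvDZ x y (p q : R) :
  dotv (p *: x + q *: y) (p *: x + q *: y) =
  p ^+ 2 * dotv x x + 2 * p * q * dotv x y + q ^+ 2 * dotv y y.
Proof.
rewrite /dotv !mulr_sumr -!big_split; apply: eq_bigr => i _ /=; rewrite !mxE.
ring.
Qed.

Lemma trmx_scalarD_rank1_mul (b c : R) x y :
  (b%:M + (c *: y) *m y^T)^T *m x = b *: x + (c * dotv y x) *: y.
Proof.
rewrite linearD /= tr_scalar_mx trmx_mul trmxK mulmxDl mul_scalar_mx -mulmxA.
by rewrite [_ *m x]mx11_scalar mul_mx_scalar linearZ /= -scalemxAl mxE -dotvE.
Qed.

Lemma sqr_coord_le_dotv x i : x i 0 ^+ 2 <= dotv x x.
Proof.
rewrite /dotv (bigD1 i) //= expr2 lerDl.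
by apply: sumr_ge0 => j _; rewrite -expr2 sqr_ge0.
Qed.

End InnerProduct.

Lemma dotv_bound_gt0 (R : realFieldType) n (U V : 'cV[R]_n -> Prop) (D : R) :
  (0 < n)%N -> spansv U -> spansv V ->
  (forall u v, U u -> V v -> `|dotv u v| <= D) -> 0 < D.
Proof.
move=> n_gt0 U_span V_span UVD; rewrite ltNge; apply/negP => D_le0.
have orth u v : U u -> V v -> dotv u v = 0.
  by move=> Uu Vv; apply/eqP; rewrite -normr_le0 (le_trans (UVD _ _ Uu Vv)).
pose e : 'cV[R]_n := delta_mx (Ordinal n_gt0) 0.
have [k [us [c [Uus eE]]]] := U_span e.
have [k' [vs [d [Vvs eE']]]] := V_span e.
have : dotv e e = 0.
  rewrite {1}eE dotv_suml big1 // => l _; rewrite dotvC eE' dotv_suml big1 ?mulr0 //.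
  by move=> l' _; rewrite dotvC orth ?mulr0.
by rewrite dotvE trmx_delta mul_delta_mx mxE eqxx => /eqP; rewrite oner_eq0.
Qed.

Section EuclideanNorm.
Variables (R : rcfType) (n : nat).
Implicit Types (x : 'cV[R]_n).

Lemma norm2_le x t : 0 <= t -> (norm2 x <= t) = (dotv x x <= t ^+ 2).
Proof.
by move=> t_ge0; rewrite /norm2 -{1}(ger0_norm t_ge0) -sqrtr_sqr ler_sqrt ?sqr_ge0.
Qed.

Lemma norm2_le1 x : (norm2 x <= 1) = (dotv x x <= 1).
Proof. by rewrite norm2_le ?expr1n. Qed.

Lemma norm2Z x (k : R) : norm2 (k *: x) = `|k| * norm2 x.
Proof.
rewrite /norm2; have -> : dotv (k *: x) (k *: x) = k ^+ 2 * dotv x x.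
  by rewrite /dotv mulr_sumr; apply: eq_bigr => i _; rewrite !mxE; ring.
by rewrite sqrtrM ?sqr_ge0 // sqrtr_sqr.
Qed.

End EuclideanNorm.

Lemma bernoulli_ineq (R : realFieldType) (x : R) k :
  -1 <= x -> 1 + k%:R * x <= (1 + x) ^+ k.
Proof.
move=> x_ge; elim: k => [|k IH]; first by rewrite mul0r addr0 expr0.
have x1_ge0 : 0 <= 1 + x by lra.
rewrite exprS; apply: le_trans (ler_wpM2l x1_ge0 IH).
have : 0 <= k%:R * x ^+ 2 by rewrite mulr_ge0 ?sqr_ge0.
by rewrite mulrSr; nra.
Qed.

Lemma exists_shrink_stretch (R : rcfType) n (rho : R) :
  (0 < n)%N -> n%:R < rho ->
  exists b t : R, [/\ 0 < b, b <= t, (rho - 1) * b ^+ 2 + t ^+ 2 <= rho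
                    & 1 < t * b ^+ n.-1].
Proof.
move=> n_gt0 rho_gt; set m : R := n%:R.
have m_ge1 : 1 <= m by rewrite /m ler1n.
(* [dl] is chosen so that [(1 + dl (rho - 1)) (1 - (m - 1) dl) > 1]. *)
pose dl := (rho - m) / (2 * m * (rho - 1)).
have den_gt0 : 0 < 2 * m * (rho - 1) by rewrite !mulr_gt0 //; lra.
have dl_gt0 : 0 < dl by rewrite divr_gt0 //; lra.
have dlE : dl * (2 * m * (rho - 1)) = rho - m by rewrite mulfVK // gt_eqF.
have dl_small : dl * (rho - 1) * (m - 1) <= (rho - m) / 2.
  by rewrite ler_pdivlMr //; nra.
have dl_lt1 : dl < 1 by nra.
exists (Num.sqrt (1 - dl)), (Num.sqrt (1 + dl * (rho - 1))).
have b2 : Num.sqrt (1 - dl) ^+ 2 = 1 - dl by rewrite sqr_sqrtr //; lra.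
have t2 : Num.sqrt (1 + dl * (rho - 1)) ^+ 2 = 1 + dl * (rho - 1).
  by rewrite sqr_sqrtr //; nra.
split.
- by rewrite sqrtr_gt0; lra.
- by rewrite ler_sqrt; nra.
- by rewrite b2 t2; lra.
set t := Num.sqrt _; set b := Num.sqrt _.
have tb_ge0 : 0 <= t * b ^+ n.-1 by rewrite mulr_ge0 ?exprn_ge0 ?sqrtr_ge0.
have bernoulli : 1 - (m - 1) * dl <= (b ^+ 2) ^+ n.-1.
  have -> : m - 1 = n.-1%:R by rewrite /m -{1}(prednK n_gt0) mulrSr addrK.
  by rewrite b2 -mulrN; apply: bernoulli_ineq; lra.
have : 1 < (t * b ^+ n.-1) ^+ 2.
  rewrite exprMn -exprM mulnC exprM t2.
  apply: lt_le_trans (ler_wpM2l _ bernoulli); nra.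
by apply: contraTT; rewrite -!leNgt => h; rewrite -(expr1n _ 2) ler_pXn2r ?nnegrE.
Qed.

Definition maps_ball_into_polar (R : realFieldType) n (V : 'cV[R]_n -> Prop)
    (A : 'M[R]_n) :=
  forall v, V v -> dotv (A^T *m v) (A^T *m v) <= 1.

Lemma maps_ball_into_polar_bounded (R : realFieldType) n (V : 'cV[R]_n -> Prop) :
  spansv V -> exists2 C : R, 0 <= C &
    forall A, maps_ball_into_polar V A -> forall i j, `|A i j| <= C.
Proof.
move=> V_span.
have row_bound (i : 'I_n) : exists C : R,
    forall A, maps_ball_into_polar V A -> forall j, `|A i j| <= C.
  have [k [vs [c [Vvs eE]]]] := V_span (delta_mx i 0).
  exists (\sum_(l < k) `|c l|) => A A_polar j.
  have -> : A i j = (A^T *m (delta_mx i 0 : 'cV_n)) j 0 by rewrite -colE !mxE.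
  rewrite eE mulmx_sumr summxE; apply: le_trans (ler_norm_sum _ _ _) _.
  apply: ler_sum => l _; rewrite -scalemxAr mxE normrM ler_piMr //.
  rewrite -(@expr_le1 _ 2) // real_normK ?num_real //.
  exact: le_trans (sqr_coord_le_dotv _ j) (A_polar _ (Vvs l)).
have [C C_bound] := fin_all_exists row_bound.
exists (\sum_i `|C i|) => [|A A_polar i j]; first exact: sumr_ge0.
apply: le_trans (C_bound i A A_polar j) _; apply: le_trans (ler_norm _) _.
by rewrite (bigD1 i) //= lerDl sumr_ge0.
Qed.

Lemma boundedv_scalar_polar (R : rcfType) n (V : 'cV[R]_n -> Prop) :
  boundedv V -> exists2 k : R, 0 < k & maps_ball_into_polar V k%:M.
Proof.
move=> [M V_le_M]; have M1_gt0 : 0 < 1 + `|M| by rewrite ltr_pwDl.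
exists (1 + `|M|)^-1; first by rewrite invr_gt0.
move=> v Vv; rewrite -norm2_le1 tr_scalar_mx mul_scalar_mx norm2Z.
rewrite gtr0_norm ?invr_gt0 // ler_pdivrMl // mulr1.
by apply: le_trans (V_le_M _ Vv) _; rewrite ler_wpDl ?ler_norm.
Qed.

Section MaximalDeterminant.
Variables (R : rcfType) (n : nat) (V : 'cV[R]_n -> Prop).
Implicit Types (A B : 'M[R]_n) (u : 'cV[R]_n).

Lemma rank1_update_det_gt1 A u (D : R) :
  (0 < n)%N -> A \in unitmx -> 0 < D -> maps_ball_into_polar V A ->
  (forall v, V v -> `|dotv u v| <= D) ->
  n%:R * D ^+ 2 < dotv (invmx A *m u) (invmx A *m u) ->
  exists B, maps_ball_into_polar V (A *m B) /\ 1 < \det B.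
Proof.
move=> n_gt0 A_unit D_gt0 A_polar uD far.
set y := invmx A *m u; set r := dotv y y.
have D2_gt0 : 0 < D ^+ 2 by rewrite exprn_gt0.
have r_gt0 : 0 < r by apply: le_lt_trans far; rewrite mulr_ge0 ?ler0n ?ltW.
set rho := r / D ^+ 2.
have rho_gt : n%:R < rho by rewrite ltr_pdivlMr.
have [b [t [b_gt0 b_le_t bt_rho det_gt1]]] := exists_shrink_stretch n_gt0 rho_gt.
pose c := (t - b) / r.
(* [B] acts as [b] orthogonally to [y] and as [t] along [y]. *)
exists (b%:M + (c *: y) *m y^T); split; last first.
  rewrite det_scalarD_rank1 ?gt_eqF // -scalemxAr mxE -dotvE -/r.
  by rewrite /c divfK ?gt_eqF // addrC subrK mulrC.
move=> v Vv; set w := A^T *m v.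
rewrite trmx_mul -mulmxA -/w trmx_scalarD_rank1_mul.
have sE : dotv y w = dotv u v by rewrite /w dotv_mulmx_tr /y mulKVmx.
rewrite dotvDZ (dotvC w y) sE -/r.
have w_le1 : dotv w w <= 1 by exact: A_polar.
have s_le : dotv u v ^+ 2 <= D ^+ 2.
  by move: (uD v Vv); rewrite ler_norml => /andP[? ?]; nra.
set s := dotv u v in s_le *.
have -> : b ^+ 2 * dotv w w + 2 * b * (c * s) * s + (c * s) ^+ 2 * r =
          b ^+ 2 * dotv w w + (t ^+ 2 - b ^+ 2) / r * s ^+ 2.
  by rewrite /c; field; rewrite gt_eqF.
have coef_ge0 : 0 <= (t ^+ 2 - b ^+ 2) / r.
  by rewrite divr_ge0 ?(ltW r_gt0) //; nra.
have rho_gt0 : 0 < rho by apply: le_lt_trans rho_gt.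
have bound : b ^+ 2 + (t ^+ 2 - b ^+ 2) / r * D ^+ 2 <= 1.
  have -> : b ^+ 2 + (t ^+ 2 - b ^+ 2) / r * D ^+ 2 =
            rho^-1 * ((rho - 1) * b ^+ 2 + t ^+ 2).
    by rewrite /rho; field; rewrite !gt_eqF.
  rewrite -[leRHS](mulVf (lt0r_neq0 rho_gt0)); apply: ler_wpM2l bt_rho.
  by rewrite invr_ge0 ltW.
have := ler_wpM2l coef_ge0 s_le.
have : b ^+ 2 * dotv w w <= b ^+ 2 by rewrite ler_piMr ?sqr_ge0.
lra.
Qed.

Lemma maxdet_invmx_bound A u (D : R) :
  (0 < n)%N -> 0 < D -> maps_ball_into_polar V A -> 0 < \det A ->
  (forall B, maps_ball_into_polar V B -> \det B <= \det A) ->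
  (forall v, V v -> `|dotv u v| <= D) ->
  norm2 (invmx A *m u) <= Num.sqrt n%:R * D.
Proof.
move=> n_gt0 D_gt0 A_polar detA_gt0 A_max uD.
rewrite norm2_le ?(mulr_ge0 (sqrtr_ge0 _) (ltW D_gt0)) // exprMn sqr_sqrtr ?ler0n //.
rewrite leNgt; apply/negP => far.
have A_unit : A \in unitmx by rewrite unitmxE unitfE lt0r_neq0.
have [B [AB_polar detB_gt1]] := rank1_update_det_gt1 n_gt0 A_unit D_gt0 A_polar uD far.
have := A_max _ AB_polar; rewrite det_mulmx.
have : \det A * 1 < \det A * \det B by rewrite ltr_pM2l.
lra.
Qed.

End MaximalDeterminant.

Lemma balanced_rescaling (R : rcfType) n (U V : 'cV[R]_n -> Prop) (A : 'M[R]_n)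
    (s t : R) :
  A \in unitmx -> 0 < s -> 0 < t ->
  (forall u, U u -> norm2 (invmx A *m u) <= s) ->
  (forall v, V v -> norm2 (A^T *m v) <= t) ->
  exists L : 'M[R]_n, L \in unitmx /\
    (forall u, U u -> norm2 (L *m u) <= Num.sqrt (s * t)) /\
    (forall v, V v -> norm2 ((invmx L)^T *m v) <= Num.sqrt (s * t)).
Proof.
move=> A_unit s_gt0 t_gt0 As At.
set k := Num.sqrt (t / s).
have k_gt0 : 0 < k by rewrite sqrtr_gt0 divr_gt0.
have ksE : k * s = Num.sqrt (s * t).
  rewrite -[X in _ * X](gtr0_norm s_gt0) -sqrtr_sqr -sqrtrM ?divr_ge0 ?ltW //.
  by congr Num.sqrt; field; rewrite gt_eqF.
have tkE : t / k = k * s.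
  apply: (mulIf (lt0r_neq0 k_gt0)); rewrite divfK ?lt0r_neq0 // mulrAC -expr2.
  by rewrite sqr_sqrtr ?divr_ge0 ?ltW // divfK ?lt0r_neq0.
have L_unit : k *: invmx A \in unitmx by rewrite unitmxZ ?unitmx_inv ?unitfE ?gt_eqF.
exists (k *: invmx A); split=> //.
split => [u Uu | v Vv].
  by rewrite -scalemxAl norm2Z gtr0_norm // -ksE ler_pM2l // As.
rewrite invmxZ ?unitmx_inv // invmxK linearZ /= -scalemxAl norm2Z gtr0_norm ?invr_gt0 //.
by rewrite -ksE -tkE mulrC ler_pM2r ?invr_gt0 // At.
Qed.

Section Compactness.
Variables (R : realType) (n : nat).
Local Open Scope classical_set_scope.

Lemma continuous_vec_mx_entry i j :
  continuous (fun x : 'rV[R]_(n * n) => vec_mx x i j).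
Proof.
under eq_fun do rewrite mxE.
exact: (@coord_continuous R 1 (n * n) 0 (mxvec_index i j)).
Qed.

Lemma continuous_det_vec_mx : continuous (fun x : 'rV[R]_(n * n) => \det (vec_mx x)).
Proof.
apply: (continuous_big add_continuous) => s _.
have prod_cont : continuous (fun x : 'rV[R]_(n * n) => \prod_i vec_mx x i (s i)).
  by apply: (continuous_big mul_continuous) => i _; exact: continuous_vec_mx_entry.
by move=> x; have := continuousM (@cst_continuous _ R ((-1) ^+ s) x) (prod_cont x).
Qed.

Lemma continuous_dotv_trmx_vec_mx (v : 'cV[R]_n) :
  continuous (fun x : 'rV[R]_(n * n) => dotv ((vec_mx x)^T *m v) ((vec_mx x)^T *m v)).
Proof.
have entry_cont i : continuous (fun x : 'rV[R]_(n * n) => ((vec_mx x)^T *m v) i 0).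
  under eq_fun do rewrite mxE.
  apply: (continuous_big add_continuous) => k _ x.
  under eq_fun do rewrite mxE.
  by have := continuousM (@continuous_vec_mx_entry k i x) (@cst_continuous _ R (v k 0) x).
apply: (continuous_big add_continuous) => i _ x.
by have := continuousM (entry_cont i x) (entry_cont i x).
Qed.

Lemma exists_maxdet (V : 'cV[R]_n -> Prop) (k : R) :
  0 < k -> maps_ball_into_polar V k%:M -> spansv V ->
  exists A : 'M[R]_n, [/\ maps_ball_into_polar V A, 0 < \det A
    & forall B, maps_ball_into_polar V B -> \det B <= \det A].
Proof.
move=> k_gt0 k_polar V_span; have [C C_ge0 C_bound] := maps_ball_into_polar_bounded V_span.
pose K := [set x : 'rV[R]_(n * n) | maps_ball_into_polar V (vec_mx x)].
have K_k : K (mxvec k%:M) by rewrite /K /= mxvecK.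
have K_closed : closed K.
  have -> : K = \bigcap_(v in V) ((fun x : 'rV[R]_(n * n) =>
      dotv ((vec_mx x)^T *m v) ((vec_mx x)^T *m v)) @^-1` [set y | y <= 1]).
    by apply/seteqP; split => x /= x_polar v Vv; exact: x_polar.
  apply: closed_bigI => v _; apply: preimage_closed; last exact: closed_le.
  by move=> x _; exact: continuous_dotv_trmx_vec_mx.
have K_bounded : bounded_set K.
  exists C; split; first exact: num_real.
  move=> C' C_lt x Kx; rewrite /Num.norm /= mx_normrE.
  apply: bigmax_le => [|[a b] _ /=]; first exact: le_trans C_ge0 (ltW C_lt).
  rewrite (ord1 a); case/mxvec_indexP: b => i j.
  by have := C_bound _ Kx i j; rewrite mxE => /le_lt_trans/(_ C_lt)/ltW.
have [c Kc c_max] := compact_EVT_max (ex_intro _ _ K_k)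
  (bounded_closed_compact K_bounded K_closed)
  (continuous_subspaceT (@continuous_det_vec_mx)).
have c_maximal x : K x -> \det (vec_mx x) <= \det (vec_mx c).
  by move=> Kx; apply: c_max; rewrite inE.
exists (vec_mx c); split; first by rewrite inE in Kc.
  apply: lt_le_trans (c_maximal _ K_k); rewrite mxvecK det_scalar; exact: exprn_gt0.
by move=> B B_polar; rewrite -[B]mxvecK; apply: c_maximal; rewrite /K /= mxvecK.
Qed.

End Compactness.

(* A copy of R carrying the completeness proof, so that the realType instances
   below, which depend on that proof, can be found by unification. *)
Definition dedekind_real (R : rcfType) of dedekind_complete R : Type := R.

Section DedekindReal.
Variables (R : rcfType) (R_complete : dedekind_complete R).
Local Open Scope classical_set_scope.
#[local] Notation Rd := (dedekind_real R_complete).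

HB.instance Definition _ := Num.RealClosedField.on Rd.

Lemma dedekind_real_archimedean : Num.archimedean_axiom Rd.
Proof.
move=> x; apply: contrapT => no_bound.
have nat_le k : k%:R <= `|x| by rewrite leNgt; apply/negP => ?; apply: no_bound; exists k.
pose nats (y : R) := exists k : nat, y = k%:R.
have nats_ub : exists b, forall y, nats y -> y <= b by exists `|x| => _ [k ->].
have [s [s_ub s_least]] := R_complete (ex_intro nats 0 (ex_intro _ 0%N erefl)) nats_ub.
have : s <= s - 1.
  apply: s_least => _ [k ->]; have := s_ub k.+1%:R (ex_intro _ k.+1 erefl).
  rewrite mulrS; lra.
lra.
Qed.

HB.instance Definition _ :=
  Num.NumDomain_bounded_isArchimedean.Build Rd dedekind_real_archimedean.

Lemma dedekind_real_supremum (E : set Rd) :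
  has_sup E -> supremums E (supremum 0 E).
Proof.
move=> [[x Ex] [b b_ub]].
have [s [s_ub s_least]] := R_complete (ex_intro _ x Ex) (ex_intro _ b b_ub).
have E_neq0 : E != set0 by apply/set0P; exists x.
rewrite /supremum (negbTE E_neq0); case: xgetP => [y -> //|no_sup].
by exfalso; apply: (no_sup s); split; [exact: s_ub | exact: s_least].
Qed.

Lemma dedekind_real_sup_adherent (E : set Rd) (eps : Rd) :
  0 < eps -> has_sup E -> exists2 e, E e & supremum 0 E - eps < e.
Proof.
move=> eps_gt0 E_sup; apply: contrapT => no_close.
have : ubound E (supremum 0 E - eps).
  by move=> y Ey; rewrite leNgt; apply/negP => ?; apply: no_close; exists y.
by move/(dedekind_real_supremum E_sup).2; lra.
Qed.

HB.instance Definition _ := ArchimedeanField_isReal.Build Rd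
  (fun E E_sup => (dedekind_real_supremum E_sup).1) dedekind_real_sup_adherent.

Lemma exists_maxdet_dedekind n (V : 'cV[R]_n -> Prop) (k : R) :
  0 < k -> maps_ball_into_polar V k%:M -> spansv V ->
  exists A : 'M[R]_n, [/\ maps_ball_into_polar V A, 0 < \det A
    & forall B, maps_ball_into_polar V B -> \det B <= \det A].
Proof. exact: (@exists_maxdet Rd n V k). Qed.

End DedekindReal.

Theorem corollary6p5 (R : rcfType) (hR : dedekind_complete R) (n : nat)
    (U V : 'cV[R]_n -> Prop)
    (hUb : boundedv U) (hVb : boundedv V) (hUs : spansv U) (hVs : spansv V)
    (Delta : R)
    (hDub : forall u v, U u -> V v -> `|dotv u v| <= Delta)
    (hDlub : forall b, (forall u v, U u -> V v -> `|dotv u v| <= b) -> Delta <= b) :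
  exists L : 'M[R]_n, L \in unitmx /\
    (forall u, U u -> norm2 (L *m u) <= Num.sqrt (Num.sqrt n%:R) * Num.sqrt Delta) /\
    (forall v, V v -> norm2 ((invmx L)^T *m v) <= Num.sqrt (Num.sqrt n%:R) * Num.sqrt Delta).
Proof.
have [n0|n_gt0] := posnP n.
  subst n; exists 1%:M; split; first exact: unitmx1.
  have bound (x : 'cV[R]_0) : norm2 x <= Num.sqrt (Num.sqrt 0%:R) * Num.sqrt Delta.
    by rewrite /norm2 /dotv big_ord0 sqrtr0 mulr_ge0 ?sqrtr_ge0.
  by split=> ? _; exact: bound.
have Delta_gt0 := dotv_bound_gt0 n_gt0 hUs hVs hDub.
have [k k_gt0 k_polar] := boundedv_scalar_polar hVb.
have [A [A_polar detA_gt0 A_max]] := exists_maxdet_dedekind hR k_gt0 k_polar hVs.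
have A_unit : A \in unitmx by rewrite unitmxE unitfE lt0r_neq0.
have U_bound u : U u -> norm2 (invmx A *m u) <= Num.sqrt n%:R * Delta.
  move=> Uu; exact: maxdet_invmx_bound n_gt0 Delta_gt0 A_polar detA_gt0 A_max (hDub u ^~ Uu).
have s_gt0 : 0 < Num.sqrt n%:R * Delta by rewrite mulr_gt0 ?sqrtr_gt0 ?ltr0n.
have V_bound v : V v -> norm2 (A^T *m v) <= 1 by rewrite norm2_le1; exact: A_polar.
have := balanced_rescaling A_unit s_gt0 ltr01 U_bound V_bound.
by rewrite mulr1 sqrtrM ?sqrtr_ge0.
Qed.
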